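(* A hyperimaginary $e$ is normal if and only if for every index set $I$ (small), the equivalence relation $\equiv_e$ on $I$-sequences of elements of $\mathfrak{C}$ is $0$-type-definable.
   Context: $\mathfrak{C}$ is a monster model of a complete first-order theory $T$; ''small'' means of cardinality smaller than that of $\mathfrak{C}$. A hyperimaginary is an equivalence class $e=a_E$ of a possibly infinite small tuple $a$ under a $0$-type-definable (type-definable without parameters) equivalence relation $E$; automorphisms act by $f(a_E)=f(a)_E$. $\mathrm{Fix}(e)=\{f\in\mathrm{Aut}(\mathfrak{C}): f(e)=e\}$. $e$ is normal if $\mathrm{Fix}(e)$ is a normal subgroup of $\mathrm{Aut}(\mathfrak{C})$. For $I$-sequences $b,c$, $b\equiv_e c$ means $f(b)=c$ for some $f\in\mathrm{Fix}(e)$ (same type over $e$). *)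

From mathcomp Require Import all_boot.
From Stdlib Require List.

Set Implicit Arguments.
Unset Strict Implicit.
Unset Printing Implicit Defensive.

Record signature := Signature {
  fsym : Type; farity : fsym -> nat;
  rsym : Type; rarity : rsym -> nat }.

Section Syntax.
Variable L : signature.

Inductive term (V : Type) : Type :=
  | tvar : V -> term V
  | tapp : forall f : fsym L, ('I_(farity f) -> term V) -> term V.

(* First-order formulas (without parameters) with free variables from V;
   the existential quantifier binds the new variable [None]. *)
Inductive formula : Type -> Type :=
  | feq  : forall V, term V -> term V -> formula V
  | frel : forall V (r : rsym L), ('I_(rarity r) -> term V) -> formula V
  | fneg : forall V, formula V -> formula V
  | fand : forall V, formula V -> formula V -> formula V
  | fex  : forall V, formula (option V) -> formula V.
End Syntax.

Record structure (L : signature) := Structure {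
  carrier :> Type;
  fint : forall f : fsym L, ('I_(farity f) -> carrier) -> carrier;
  rint : forall r : rsym L, ('I_(rarity r) -> carrier) -> Prop }.

Section Semantics.
Variables (L : signature) (M : structure L).

Fixpoint teval (V : Type) (s : V -> M) (t : term L V) : M :=
  match t with
  | tvar v => s v
  | tapp f args => @fint L M f (fun i => teval s (args i))
  end.

Definition ext_env (V : Type) (s : V -> M) (m : M) : option V -> M :=
  fun o => match o with Some v => s v | None => m end.

Fixpoint sat (V : Type) (phi : formula L V) : (V -> M) -> Prop :=
  match phi in formula _ V0 return (V0 -> M) -> Prop with
  | feq _ t u => fun s => teval s t = teval s u
  | frel _ r args => fun s => @rint L M r (fun i => teval s (args i))
  | fneg _ p => fun s => ~ sat p s
  | fand _ p q => fun s => sat p s /\ sat q s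
  | fex _ p => fun s => exists m : M, sat p (ext_env s m)
  end.

Definition small (J : Type) : Prop :=
  (exists g : J -> M, injective g) /\ ~ (exists g : M -> J, injective g).

Definition automorphism (f : M -> M) : Prop :=
  bijective f /\
  (forall (g : fsym L) (x : 'I_(farity g) -> M),
      f (@fint L M g x) = @fint L M g (fun i => f (x i))) /\
  (forall (r : rsym L) (x : 'I_(rarity r) -> M),
      @rint L M r x <-> @rint L M r (fun i => f (x i))).

Definition same_type (J : Type) (b c : J -> M) : Prop :=
  forall phi : formula L J, sat phi b <-> sat phi c.

(* Monster model: saturated in its own cardinality (every finitely satisfiable
   partial 1-type over a small parameter set is realized) and strongly
   homogeneous (small tuples with the same type are conjugate by an
   automorphism). *)
Definition monster : Prop :=
  (forall (J : Type) (a : J -> M), small J ->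
     forall Sigma : formula L (option J) -> Prop,
       (forall l : list (formula L (option J)),
           (forall phi, List.In phi l -> Sigma phi) ->
           exists m : M, forall phi, List.In phi l -> sat phi (ext_env a m)) ->
       exists m : M, forall phi, Sigma phi -> sat phi (ext_env a m))
  /\
  (forall (J : Type) (b c : J -> M), small J -> same_type b c ->
     exists f, automorphism f /\ forall j, f (b j) = c j).

(* A binary relation on I-sequences is 0-type-definable: it is the set of
   realizations of a partial type (set of parameter-free formulas) in the
   variables I + I (left copy for the first sequence, right for the second). *)
Definition type_definable2 (I : Type) (R : (I -> M) -> (I -> M) -> Prop) :=
  exists Sigma : formula L (I + I) -> Prop,
    forall b c : I -> M,
      R b c <-> (forall phi, Sigma phi -> sat phi (fun v => match v with
                                                         | inl i => b i
                                                         | inr i => c i end)).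

Definition fo_equivalence (I : Type) (E : (I -> M) -> (I -> M) -> Prop) :=
  (forall x, E x x) /\ (forall x y, E x y -> E y x) /\
  (forall x y z, E x y -> E y z -> E x z).

(* Hyperimaginary e = a_E, given by a small tuple a : I -> M and a
   0-type-definable equivalence relation E on I-sequences. *)
Definition fixes (I : Type) (E : (I -> M) -> (I -> M) -> Prop) (a : I -> M)
  (f : M -> M) : Prop := E (fun i => f (a i)) a.

Definition normal_hyp (I : Type) (E : (I -> M) -> (I -> M) -> Prop) (a : I -> M) :=
  forall g ginv h : M -> M,
    automorphism g -> cancel g ginv -> cancel ginv g ->
    automorphism h -> fixes E a h ->
    fixes E a (fun x => g (h (ginv x))).

Definition equiv_over (I : Type) (E : (I -> M) -> (I -> M) -> Prop) (a : I -> M)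
  (J : Type) (b c : J -> M) : Prop :=
  exists f, automorphism f /\ fixes E a f /\ forall j, f (b j) = c j.
End Semantics.

From Pilot Require Import Defs.
From mathcomp Require Import all_boot.
From mathcomp Require classical_sets.
From Stdlib Require Import Classical ClassicalEpsilon FunctionalExtensionality ProofIrrelevance.

(* Suppose Fix(e) is normal, and let Sigma be the set of formulas, in two copies of the
   variables J, true of all pairs b ==_e c.  If (b, c) realizes Sigma, saturation gives a1, a2
   with a1 == a, (b, a1) == (c, a2) and E(a1, a2): each finite part of this type projects to a
   formula of Sigma, since a pair (b', f b') with f in Fix(e) extends by (a, f a).  Homogeneity
   yields h with h(a) = a1 and g with g(b, a1) = (c, a2); then h^-1 g h fixes e, hence so does
   its conjugate g, and g(b) = c.  Conversely, a type-definable relation is invariant under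
   automorphisms; applying g to the pair (g^-1 a, h g^-1 a), where h fixes e, yields f in Fix(e)
   with f(a) = g h g^-1 (a), so g h g^-1 fixes e.

   Only one-variable saturation is assumed of the monster; saturation in |J| + |I| variables
   follows by Zorn's lemma.  When the monster is finite, saturation is trivial and homogeneity
   reduces to a small subtuple. *)

Set Implicit Arguments.
Unset Strict Implicit.
Unset Printing Implicit Defensive.

Lemma list_choice_incl (A B : Type) (Pb : B -> Prop) (R : A -> list B -> Prop) (cs : list A) :
  (forall c, List.In c cs -> exists2 l, (forall b, List.In b l -> Pb b) & R c l) ->
  exists2 L, (forall b, List.In b L -> Pb b) &
    forall c, List.In c cs -> exists2 l, R c l & List.incl l L.
Proof.
elim: cs => [|c cs IH] Hcs; first by exists nil.
have [L PL HL] := IH (fun c' H => Hcs c' (or_intror H)).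
have [l Pl Rl] := Hcs c (or_introl erefl).
exists (l ++ L)%list.
  by move=> b /(List.in_app_or _ _ _)[]; auto.
move=> c' [<-|/HL[l' Rl' incl']].
- by exists l => //; apply: List.incl_appl; apply: List.incl_refl.
- by exists l' => //; apply: List.incl_appr.
Qed.

Lemma In_mem (T : eqType) (x : T) (s : seq T) : x \in s -> List.In x s.
Proof. by elim: s => //= y s IH; rewrite in_cons => /orP[/eqP->|/IH]; auto. Qed.

Lemma sval_inj (T : Type) (P : T -> Prop) : injective (@proj1_sig T P).
Proof. by move=> [x Px] [y Py] /= E; subst y; rewrite (proof_irrelevance _ Px Py). Qed.

Lemma Zorn_maximal (T : Type) (P : (T -> Prop) -> Prop) :
  (forall F : (T -> Prop) -> Prop, (forall X, F X -> P X) ->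
     (forall X Y, F X -> F Y -> (forall x, X x -> Y x) \/ (forall x, Y x -> X x)) ->
     P (fun x => exists2 X, F X & X x)) ->
  exists2 A, P A & forall B, (forall x, A x -> B x) -> P B -> forall x, B x -> A x.
Proof.
move=> chainP; have [A [PA maxA]] := classical_sets.Zorn_bigcup chainP.
exists A => // B AB PB x Bx; apply: NNPP => nAx.
by apply: (maxA B) => //; split=> // BA; apply/nAx/BA.
Qed.

Definition pairwise (T : Type) (Q : T -> T -> Prop) (A : T -> Prop) :=
  forall z z', A z -> A z' -> Q z z'.

Lemma pairwise_chain_union (T : Type) (Q : T -> T -> Prop) (F : (T -> Prop) -> Prop) :
  (forall X Y, F X -> F Y -> (forall x, X x -> Y x) \/ (forall x, Y x -> X x)) ->
  (forall X, F X -> pairwise Q X) -> pairwise Q (fun x => exists2 X, F X & X x).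
Proof.
move=> Ftot FQ z z' [X FX Xz] [Y FY Yz'].
by case: (Ftot X Y FX FY) => [XY|YX]; [apply: (FQ Y)|apply: (FQ X)]; auto.
Qed.

Lemma Zorn_pairwise (T : Type) (Q : T -> T -> Prop) :
  exists2 A, pairwise Q A & forall z0, Q z0 z0 -> (forall z, A z -> Q z z0 /\ Q z0 z) -> A z0.
Proof.
have [A QA maxA] := @Zorn_maximal _ (pairwise Q) (fun F FQ Ftot => pairwise_chain_union Ftot FQ).
exists A => // z0 Qz0 Az0; apply: (maxA (fun z => A z \/ z = z0)); [by left| |by right].
by move=> z z' [Az|->] [Az'|->] //; [exact: QA|exact: (Az0 z Az).1|exact: (Az0 z' Az').2].
Qed.

Lemma chain_directed (T A : Type) (F : (T -> Prop) -> Prop) (Q : A -> (T -> Prop) -> Prop)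
    (X0 : T -> Prop) (vs : list A) :
  (forall X Y, F X -> F Y -> (forall x, X x -> Y x) \/ (forall x, Y x -> X x)) -> F X0 ->
  (forall a X Y, (forall x, X x -> Y x) -> Q a X -> Q a Y) ->
  (forall a, List.In a vs -> exists2 X, F X & Q a X) ->
  exists2 G, F G & forall a, List.In a vs -> Q a G.
Proof.
move=> Ftot FX0 Qmono; elim: vs => [|a vs IH] Hvs; first by exists X0.
have [G FG QG] := IH (fun b H => Hvs b (or_intror H)).
have [X FX QX] := Hvs a (or_introl erefl).
have [XG|GX] := Ftot X G FX FG.
  by exists G => // b [<-|/QG]; [apply: Qmono QX|].
by exists X => // b [<-|/QG/(Qmono _ _ _ GX)].
Qed.

(** * Cardinal arithmetic *)

Definition injects (X Y : Type) := exists f : X -> Y, injective f.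
Definition finite_type (X : Type) := exists l : list X, forall x, List.In x l.

Lemma injects_refl (X : Type) : injects X X.
Proof. by exists id. Qed.

Lemma injects_trans (X Y Z : Type) : injects X Y -> injects Y Z -> injects X Z.
Proof. by move=> [f fi] [g gi]; exists (g \o f); apply: inj_comp. Qed.

Lemma injects_sum (X X' Y Y' : Type) :
  injects X X' -> injects Y Y' -> injects (X + Y) (X' + Y').
Proof.
move=> [f fi] [g gi]; exists (fun u => match u with inl x => inl (f x) | inr y => inr (g y) end).
by move=> [x|y] [x'|y'] //= [E]; [rewrite (fi _ _ E)|rewrite (gi _ _ E)].
Qed.

Lemma injects_sum_sym (X Y : Type) : injects (X + Y) (Y + X).
Proof.
by exists (fun u => match u with inl x => inr x | inr y => inl y end) => -[x|y] [x'|y'] // [->].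
Qed.

Lemma finite_sum (X Y : Type) : finite_type X -> finite_type Y -> finite_type (X + Y).
Proof.
move=> [l Hl] [l' Hl']; exists (List.map inl l ++ List.map inr l')%list => -[x|y];
  apply: List.in_or_app; [left|right]; exact: List.in_map.
Qed.

Lemma finite_injects_ord (X : Type) (l : list X) : (forall x, List.In x l) ->
  exists2 idx : X -> 'I_(List.length l), injective idx & forall x0 x, List.nth (idx x) l x0 = x.
Proof.
move=> Hl; have idxP x : exists i : 'I_(List.length l), forall x0, List.nth i l x0 = x.
  have [i [/ltP lti <-]] := List.In_nth l x x (Hl x).
  by exists (Ordinal lti) => x0; apply: List.nth_indep; apply/ltP.
have [idx Hidx] := choice _ idxP.
exists idx => // x y Exy.
by rewrite -(Hidx x x) Exy Hidx.
Qed.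

Lemma nat_not_finite (X : Type) : injects nat X -> ~ finite_type X.
Proof.
move=> [f fi] [l /finite_injects_ord[idx idxi _]].
have /leq_card : injective (fun i : 'I_(List.length l).+1 => idx (f i)).
  by move=> i j /idxi /fi /val_inj.
by rewrite !card_ord ltnn.
Qed.

Lemma finite_or_nat (X : Type) : finite_type X \/ injects nat X.
Proof.
case: (classic (finite_type X)) => [|nfin]; [by left|right].
have fresh (s : list X) : exists x, ~ List.In x s.
  by apply: NNPP => nx; apply: nfin; exists s => x; apply: NNPP => nix; apply: nx; exists x.
have [next nextP] := choice _ fresh.
pose fix prefix n := if n is k.+1 then next (prefix k) :: prefix k else [::].
have prefixP n k : k < n -> List.In (next (prefix k)) (prefix n).
  elim: n => // n IH; rewrite ltnS leq_eqVlt => /orP[/eqP->|/IH]; [left|right] => //.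
exists (fun n => next (prefix n)) => i j Eij.
case: (ltngtP i j) => // [/prefixP|/prefixP]; [rewrite Eij|rewrite -Eij] => /nextP //.
Qed.



Lemma injects_total (X Y : Type) : injects X Y \/ injects Y X.
Proof.
have [A QA maxA] := Zorn_pairwise (fun z z' : X * Y => z.1 = z'.1 <-> z.2 = z'.2).
have [domA|/not_all_ex_not[x0 nx0]] := classic (forall x, exists y, A (x, y)).
  left; have [f Af] := choice _ domA; exists f => x x' Efx.
  exact: (QA _ _ (Af x) (Af x')).2.
have [ranA|/not_all_ex_not[y0 ny0]] := classic (forall y, exists x, A (x, y)).
  right; have [g Ag] := choice _ ranA; exists g => y y' Egy.
  exact: (QA _ _ (Ag y) (Ag y')).1.
have : A (x0, y0).
  apply: maxA => // -[x y] Axy; rewrite /=.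
  have nx : x <> x0 by move=> Ex; apply: nx0; exists y; rewrite -Ex.
  have ny : y <> y0 by move=> Ey; apply: ny0; exists x; rewrite -Ey.
  by split; split=> E; [case: nx|case: ny|case: nx|case: ny].
by move=> Ax0; case: nx0; exists y0.
Qed.

Lemma exists_nat_partition (X : Type) :
  exists (S : Type) (ev : S * nat -> X), injective ev /\ finite_type {x | ~ exists p, ev p = x}.
Proof.
have [A QA maxA] :=
  Zorn_pairwise (fun e e' : nat -> X => forall n n', e n = e' n' -> e = e' /\ n = n').
pose ev (p : {e | A e} * nat) := sval p.1 p.2.
exists {e | A e}, ev; split.
  move=> [[e Ae] n] [[e' Ae'] n'] /(QA _ _ Ae Ae')[Ee /= ->]; subst e'.
  by rewrite (proof_irrelevance _ Ae Ae').
have [//|[h hi]] := finite_or_nat {x | ~ exists p, ev p = x}.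
pose e0 n := sval (h n).
have fresh e n n' : A e -> e n <> e0 n'.
  by move=> Ae E; apply: (svalP (h n')); exists (exist _ e Ae, n).
have : A e0.
  apply: maxA => [n n' /sval_inj/hi ->|e Ae]; first by [].
  by split=> n n' E; [case: (fresh e n n' Ae)|case: (fresh e n' n Ae)].
by move=> Ae0; case: (svalP (h 0)); exists (exist _ e0 Ae0, 0).
Qed.

Lemma injects_image_sum (A B : Type) (g : A -> B) : injective g ->
  injects B (A + {b | ~ exists a, g a = b}).
Proof.
move=> gi.
have code b : exists c : A + {b | ~ exists a, g a = b},
    match c with inl a => g a = b | inr b' => sval b' = b end.
  have [[a <-]|nb] := classic (exists a, g a = b); first by exists (inl a).
  by exists (inr (exist _ b nb)).
have [f fP] := choice _ code; exists f => b b' Ef.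
by move: (fP b) (fP b'); rewrite Ef; case: (f b') => [a|[x nx]] /= -> ->.
Qed.

Lemma prod_nat_sum_injects (S : Type) : injects ((S * nat) + (S * nat)) (S * nat).
Proof.
exists (fun u => match u with inl (s, n) => (s, n.*2) | inr (s, n) => (s, n.*2.+1) end).
move=> [[s n]|[s n]] [[s' n']|[s' n']] [<- E]; have := congr1 odd E;
  rewrite /= ?odd_double // => _; have := congr1 half E;
  by rewrite /= ?doubleK ?uphalf_double => ->.
Qed.

Lemma sum_self_injects (X : Type) : injects nat X -> injects (X + X) X.
Proof.
move=> natX; have [S [ev [evi Rfin]]] := exists_nat_partition X.
have [[s0]|noS] := classic (inhabited S); last first.
  exfalso; apply: nat_not_finite Rfin; apply: (injects_trans natX).
  by exists (fun x => exist _ x (fun '(ex_intro p _) => noS (inhabits p.1))) => x y [].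
have Rnat : injects {x | ~ exists p, ev p = x} nat.
  have [l /finite_injects_ord[idx idxi _]] := Rfin.
  by exists (fun x => val (idx x)) => x y /val_inj/idxi.
(* [X] is [S * nat] up to a finite remainder, which one copy of [nat] absorbs. *)
have XS : injects X (S * nat).
  apply: (injects_trans (injects_image_sum evi)).
  apply: (injects_trans (injects_sum (injects_refl _) Rnat)).
  apply: injects_trans (injects_sum (injects_refl _) _) (prod_nat_sum_injects S).
  by exists (pair s0) => n n' [].
apply: (injects_trans (injects_sum XS XS)); apply: (injects_trans (prod_nat_sum_injects S)).
by exists ev.
Qed.

Section Small.
Variables (L : signature) (M : structure L).

Lemma small_sub (Q K : Type) : small M K -> injects Q K -> small M Q.
Proof.
move=> [KM nMK] QK; split; first exact: injects_trans QK KM.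
by move=> MQ; apply/nMK/(injects_trans MQ QK).
Qed.

Lemma small_sum (X Y : Type) : injects nat M -> small M X -> small M Y -> small M (X + Y).
Proof.
move=> natM [XM nMX] [YM nMY]; split.
  exact: injects_trans (injects_sum XM YM) (sum_self_injects natM).
wlog XY : X Y XM YM nMX nMY / injects X Y.
  move=> wlog; case: (injects_total X Y) => [XY|YX]; first exact: wlog.
  by move=> MXY; apply: (wlog Y X) => //; apply: injects_trans MXY (injects_sum_sym X Y).
move=> MXY; have MYY := injects_trans MXY (injects_sum XY (injects_refl Y)).
have [Yfin|natY] := finite_or_nat Y.
  by apply: (nat_not_finite (injects_trans natM MYY)); apply: finite_sum.
exact/nMY/(injects_trans MYY (sum_self_injects natY)).
Qed.

End Small.

(** * Formulas: renaming, support and projection *)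

Section Renaming.
Variable L : signature.

Fixpoint trename (V V' : Type) (h : V -> V') (t : term L V) : term L V' :=
  match t with
  | tvar v => tvar L (h v)
  | tapp f args => tapp (fun i => trename h (args i))
  end.

Fixpoint frename (V : Type) (phi : formula L V) : forall V', (V -> V') -> formula L V' :=
  match phi in formula _ V0 return forall V', (V0 -> V') -> formula L V' with
  | feq _ t u => fun V' h => feq (trename h t) (trename h u)
  | Defs.frel _ r args => fun V' h => Defs.frel (fun i => trename h (args i))
  | fneg _ p => fun V' h => fneg (frename p h)
  | fand _ p q => fun V' h => fand (frename p h) (frename q h)
  | fex _ p => fun V' h => fex (frename p (option_map h))
  end.

(* Holds only in nonempty structures, hence the [inhabited M] hypotheses below. *)
Definition ftrue (V : Type) : formula L V := fex (feq (tvar L None) (tvar L None)).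
Definition fimp (V : Type) (p q : formula L V) := fneg (fand p (fneg q)).
Definition fiff (V : Type) (p q : formula L V) := fand (fimp p q) (fimp q p).

Fixpoint fconj (V : Type) (l : list (formula L V)) : formula L V :=
  if l is p :: l then fand p (fconj l) else ftrue V.

End Renaming.

Section Satisfaction.
Variables (L : signature) (M : structure L).

Lemma eq_teval (V : Type) (t : term L V) (s s' : V -> M) : s =1 s' -> teval s t = teval s' t.
Proof.
move=> e; elim: t => [v|f args IH] /=; first exact: e.
by congr fint; apply: functional_extensionality => i; apply: IH.
Qed.

Lemma eq_sat (V : Type) (phi : formula L V) (s s' : V -> M) : s =1 s' -> sat phi s <-> sat phi s'.
Proof.
elim: phi s s' => {V} [V t u|V r args|V p IH|V p IHp q IHq|V p IH] s s' e /=.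
- by rewrite (eq_teval t e) (eq_teval u e).
- suff -> : (fun i => teval s (args i)) = (fun i => teval s' (args i)) by [].
  by apply: functional_extensionality => i; apply: eq_teval.
- by rewrite (IH s s' e).
- by rewrite (IHp s s' e) (IHq s s' e).
- have e' m : ext_env s m =1 ext_env s' m by case.
  by split=> -[m Hm]; exists m; apply/(IH _ _ (e' m)).
Qed.

Lemma teval_rename (V V' : Type) (h : V -> V') (t : term L V) (s : V' -> M) :
  teval s (trename h t) = teval (s \o h) t.
Proof.
elim: t => [v|f args IH] //=.
by congr fint; apply: functional_extensionality => i; apply: IH.
Qed.

Lemma sat_rename (V V' : Type) (phi : formula L V) (h : V -> V') (s : V' -> M) :
  sat (frename phi h) s <-> sat phi (s \o h).
Proof.
elim: phi V' h s => {V} [V t u|V r args|V p IH|V p IHp q IHq|V p IH] V' h s /=.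
- by rewrite !teval_rename.
- suff -> : (fun i => teval s (trename h (args i))) = (fun i => teval (s \o h) (args i)) by [].
  by apply: functional_extensionality => i; apply: teval_rename.
- by rewrite IH.
- by rewrite IHp IHq.
- by split=> -[m Hm]; exists m; move: Hm; rewrite IH; apply: (iffLR (eq_sat _ _)) => -[v|].
Qed.

Lemma sat_fiff (V : Type) (p q : formula L V) (s : V -> M) :
  sat (fiff p q) s <-> (sat p s <-> sat q s).
Proof.
rewrite /=; split=> [[pq qp]|[pq qp]]; last by split=> -[]; auto.
by split=> Hx; apply: NNPP => Hn; [apply: pq|apply: qp].
Qed.

Lemma sat_fconj (V : Type) (l : list (formula L V)) (s : V -> M) :
  inhabited M -> sat (fconj l) s <-> forall phi, List.In phi l -> sat phi s.
Proof.
move=> [m0]; elim: l => [|p l IH] /=; first by split=> // _; exists m0.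
by rewrite IH; split=> [[Hp Hl] phi [<-|]|H]; auto.
Qed.

Lemma sat_fconj_incl (V : Type) (l l' : list (formula L V)) (s : V -> M) :
  inhabited M -> List.incl l l' -> sat (fconj l') s -> sat (fconj l) s.
Proof. by move=> M0 ll' /(sat_fconj _ _ M0) H; apply/(sat_fconj _ _ M0) => phi /ll' /H. Qed.

End Satisfaction.

Section Support.
Variables (L : signature) (M : structure L).

Definition term_supported (V : Type) (l : list V) (t : term L V) :=
  forall s s' : V -> M, (forall v, List.In v l -> s v = s' v) -> teval s t = teval s' t.

Definition depends_only (V : Type) (D : V -> Prop) (phi : formula L V) :=
  forall s s' : V -> M, (forall v, D v -> s v = s' v) -> sat phi s <-> sat phi s'.

Lemma terms_common_support (V : Type) (n : nat) (args : 'I_n -> term L V) :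
  (forall i, exists l, term_supported l (args i)) ->
  exists l, forall i, term_supported l (args i).
Proof.
move=> supp; have [l _ Hl] : exists2 l : list V, (forall v, List.In v l -> True) &
    forall i, List.In i (enum 'I_n) -> exists2 li, term_supported li (args i) & List.incl li l.
  by apply: list_choice_incl => i _; have [li Hli] := supp i; exists li.
exists l => i s s' e; have [li Hli incli] := Hl i (In_mem (mem_enum _ i)).
by apply: Hli => v /incli; apply: e.
Qed.

Lemma term_finite_support (V : Type) (t : term L V) : exists l, term_supported l t.
Proof.
elim: t => [v|f args /terms_common_support[l Hl]]; first by exists [:: v] => s s' e; apply: e; left.
by exists l => s s' e /=; congr fint; apply: functional_extensionality => i; apply: Hl.
Qed.

Lemma formula_finite_support (V : Type) (phi : formula L V) :
  exists l : list V, depends_only (fun v => List.In v l) phi.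
Proof.
elim: phi => {V} [V t u|V r args|V p [l Hl]|V p [lp Hp] q [lq Hq]|V p [l Hl]].
- have [l1 H1] := term_finite_support t; have [l2 H2] := term_finite_support u.
  exists (l1 ++ l2)%list => s s' e /=.
  by rewrite (H1 s s') ?(H2 s s') // => v Hv; apply/e/List.in_or_app; auto.
- have [l Hl] := terms_common_support (fun i => term_finite_support (args i)).
  exists l => s s' e /=.
  by suff -> : (fun i => teval s (args i)) = (fun i => teval s' (args i)) by [];
    apply: functional_extensionality => i; apply: Hl.
- by exists l => s s' e /=; rewrite (Hl s s' e).
- exists (lp ++ lq)%list => s s' e /=.
  by rewrite (Hp s s') ?(Hq s s') // => v Hv; apply/e/List.in_or_app; auto.
- exists (List.flat_map (fun o => if o is Some v then [:: v] else [::]) l) => s s' e /=.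
  have e' m o : List.In o l -> ext_env s m o = ext_env s' m o.
    by case: o => //= v Hv; apply: e; apply/List.in_flat_map; exists (Some v); split=> //; left.
  by split=> -[m Hm]; exists m; apply/(Hl _ _ (e' m)).
Qed.

End Support.

Lemma partial_inverse (X Y : Type) (r : Y -> X) :
  injective r -> exists rho : X -> option Y, forall y, rho (r y) = Some y.
Proof.
move=> ri; have inv x : exists o : option Y, forall y, r y = x -> o = Some y.
  have [[y Ey]|ny] := classic (exists y, r y = x); last by exists None => y Ey; case: ny; exists y.
  by exists (Some y) => y' Ey'; congr Some; apply: ri; rewrite Ey Ey'.
by have [rho Hrho] := choice _ inv; exists rho => y; apply: Hrho.
Qed.

Section Projection.
Variables (L : signature) (M : structure L).
Hypothesis m0 : M.

Lemma formula_projection_support (X : Type) (l : list X) (phi : formula L X)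
    (Y : Type) (r : Y -> X) :
  injective r -> depends_only M (fun x => List.In x l \/ exists y, r y = x) phi ->
  exists chi : formula L Y, forall s, sat chi s <-> exists t : X -> M, t \o r =1 s /\ sat phi t.
Proof.
elim: l Y r => [|u l IH] Y r ri supp.
  (* No variable outside the range of [r] matters: send them all to the quantified one. *)
  have [rho rhoK] := partial_inverse ri.
  exists (fex (frename phi rho)) => s /=; split.
    by case=> m /sat_rename Hm; exists (ext_env s m \o rho); split=> // y /=; rewrite rhoK.
  case=> t [tr Ht]; exists m0; apply/sat_rename; apply: (supp _ t _).2 Ht.
  by move=> x [[]|[y <-]]; rewrite /= rhoK; apply/esym/tr.
have [[y0 ry0]|nu] := classic (exists y, r y = u).
  apply: IH => // s s' e; apply: supp => x [[<-|Hx]|Hx]; apply: e; auto.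
  by right; exists y0.
pose r' (o : option Y) := if o is Some y then r y else u.
have r'i : injective r'.
  by move=> [a|] [b|] //= E; [rewrite (ri _ _ E)|case: nu; exists a|case: nu; exists b].
have supp' : depends_only M (fun x => List.In x l \/ exists o, r' o = x) phi.
  move=> s s' e; apply: supp => x [[<-|Hx]|[y <-]]; apply: e;
    [right; exists None|left|right; exists (Some y)] => //.
have [chi Hchi] := IH _ r' r'i supp'.
exists (fex chi) => s /=; split.
  by case=> m /Hchi[t [tr Ht]]; exists t; split=> // y; apply: (tr (Some y)).
case=> t [tr Ht]; exists (t u); apply/Hchi; exists t; split=> // -[y|] //=.
exact: tr.
Qed.

Lemma formula_projection (X Y : Type) (r : Y -> X) (phi : formula L X) : injective r ->
  exists chi : formula L Y, forall s, sat chi s <-> exists t : X -> M, t \o r =1 s /\ sat phi t.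
Proof.
move=> ri; have [l Hl] := formula_finite_support M phi.
by apply: (formula_projection_support (l := l)) => // s s' e; apply: Hl => v Hv; apply: e; left.
Qed.

End Projection.

Section Automorphisms.
Variables (L : signature) (M : structure L).

Lemma teval_aut (f : M -> M) (V : Type) (s : V -> M) (t : term L V) :
  automorphism f -> teval (f \o s) t = f (teval s t).
Proof.
case=> _ [fF _]; elim: t => [v|g args IH] //=.
by rewrite fF; congr fint; apply: functional_extensionality => i; apply: IH.
Qed.

Lemma sat_aut (f : M -> M) (V : Type) (phi : formula L V) (s : V -> M) :
  automorphism f -> sat phi (f \o s) <-> sat phi s.
Proof.
move=> faut; have [[g fK gK] [_ fR]] := faut.
elim: phi s => {V} [V t u|V r args|V p IH|V p IHp q IHq|V p IH] s /=.
- by rewrite !teval_aut //; split=> [/(can_inj fK)|->].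
- suff -> : (fun i => teval (f \o s) (args i)) = (fun i => f (teval s (args i))) by rewrite -fR.
  by apply: functional_extensionality => i; rewrite teval_aut.
- by rewrite IH.
- by rewrite IHp IHq.
- split=> -[m Hm].
    exists (g m); rewrite -IH; move: Hm; apply: (iffLR (eq_sat _ _)) => -[v|] //=.
  by exists (f m); move: Hm; rewrite -IH; apply: (iffLR (eq_sat _ _)) => -[v|].
Qed.

Lemma automorphism_inv (f g : M -> M) :
  automorphism f -> cancel f g -> cancel g f -> automorphism g.
Proof.
move=> [_ [fF fR]] fK gK; split; first by exists f.
split=> [h x|r x].
  apply: (can_inj fK); rewrite gK fF; congr fint.
  by apply: functional_extensionality => i; rewrite gK.
rewrite (fR r (fun i => g (x i))).
by suff -> : (fun i => f (g (x i))) = x by []; apply: functional_extensionality => i; rewrite gK.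
Qed.

Lemma automorphism_comp (f g : M -> M) :
  automorphism f -> automorphism g -> automorphism (f \o g).
Proof.
move=> [fbij [fF fR]] [gbij [gF gR]]; split; first exact: bij_comp.
by split=> [h x|r x] /=; [rewrite gF fF|rewrite gR fR].
Qed.

Lemma type_definable2_aut (I : Type) (R : (I -> M) -> (I -> M) -> Prop) (f : M -> M)
    (x y : I -> M) :
  type_definable2 R -> automorphism f -> R x y -> R (f \o x) (f \o y).
Proof.
move=> [Sig HSig] faut; rewrite !HSig => Rxy phi /Rxy; rewrite -(sat_aut _ _ faut).
by apply: (iffLR (eq_sat _ _)) => -[i|i].
Qed.

End Automorphisms.

(** * Realizing types in many variables *)

Section Saturation.
Variables (L : signature) (M : structure L).

Definition sum_env (P W : Type) (p : P -> M) (t : W -> M) : P + W -> M :=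
  fun v => match v with inl x => p x | inr w => t w end.

Definition saturated_over (Q : Type) :=
  forall (q : Q -> M) (Sig : formula L (option Q) -> Prop),
  (forall l, (forall phi, List.In phi l -> Sig phi) ->
     exists m, forall phi, List.In phi l -> sat phi (ext_env q m)) ->
  exists m, forall phi, Sig phi -> sat phi (ext_env q m).

Definition functional (W : Type) (G : W * M -> Prop) :=
  pairwise (fun z z' : W * M => z.1 = z'.1 -> z.2 = z'.2) G.

Definition extends (W : Type) (G : W * M -> Prop) (t : W -> M) :=
  forall w m, G (w, m) -> t w = m.

Lemma extend_partial (W : Type) (G : W * M -> Prop) (t : W -> M) : functional G ->
  exists2 t', extends G t' & forall w, ~ (exists m, G (w, m)) -> t' w = t w.
Proof.
move=> Gfun; have ext w : exists m, G (w, m) \/ ~ (exists m', G (w, m')) /\ m = t w.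
  by have [[m Gm]|nG] := classic (exists m, G (w, m)); [exists m; left|exists (t w); right].
have [t' t'P] := choice _ ext; exists t' => [w m Gm|w nG].
  by case: (t'P w) => [Gt'|[[]]]; [apply: (Gfun _ _ Gt' Gm)|exists m].
by case: (t'P w) => [Gt'|[]] //; case: nG; exists (t' w).
Qed.

Section ManyVariables.
Variables (P W : Type) (p : P -> M) (Sig : formula L (P + W) -> Prop).
Hypothesis m0 : M.
Hypothesis saturated_sub : forall (Q : Type) (i : Q -> P + W), injective i -> saturated_over Q.
Hypothesis Sig_fin_sat : forall l, (forall phi, List.In phi l -> Sig phi) ->
  exists t : W -> M, forall phi, List.In phi l -> sat phi (sum_env p t).

Definition fin_sat_extending (G : W * M -> Prop) :=
  forall l, (forall phi, List.In phi l -> Sig phi) ->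
  exists2 t, extends G t & sat (fconj l) (sum_env p t).

Definition good_partial (G : W * M -> Prop) := functional G /\ fin_sat_extending G.

Lemma good_chain_union (F : (W * M -> Prop) -> Prop) :
  (forall X Y, F X -> F Y -> (forall x, X x -> Y x) \/ (forall x, Y x -> X x)) ->
  (forall X, F X -> good_partial X) -> good_partial (fun x => exists2 X, F X & X x).
Proof.
move=> Ftot Fgood; set U := fun x => _.
have Ufun : functional U by apply: pairwise_chain_union => // X /Fgood[].
split=> // l Hl.
have [[X0 FX0]|noF] := classic (exists X, F X); last first.
  have [t Ht] := Sig_fin_sat Hl.
  by exists t => [w m [X FX _]|]; [case: noF; exists X|apply/sat_fconj].
have [vs supp] := formula_finite_support M (fconj l).
pose inU w := exists m, U (w, m).
have [G FG QG] : exists2 G, F G &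
    forall v, List.In v vs -> forall w, v = inr w -> inU w -> exists m, G (w, m).
  apply: (chain_directed Ftot FX0) => [v X Y XY QX w Ev /(QX w Ev)[m /XY Ym]|[a|w] _].
  - by exists m.
  - by exists X0 => // w [].
  have [[m [X FX Xm]]|nU] := classic (inU w); last by exists X0 => // w' [<-].
  by exists X => // w' [<-] _; exists m.
have [t tG Ht] := (Fgood G FG).2 l Hl.
have [t' t'U t't] := extend_partial t Ufun.
exists t' => //; apply: (supp _ _ _).1 Ht => -[a|w] Hw //=.
have [Uw|nU] := classic (inU w); last by rewrite t't.
have [m Gm] := QG _ Hw w erefl Uw.
by rewrite (tG _ _ Gm) (t'U w m) //; exists G.
Qed.

Lemma good_maximal_total (A : W * M -> Prop) : good_partial A ->
  (forall B, (forall x, A x -> B x) -> good_partial B -> forall x, B x -> A x) ->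
  forall w0, exists m, A (w0, m).
Proof.
move=> [Afun AFS] maxA w0; apply: NNPP => nw0.
have [aval avalA _] := extend_partial (fun _ => m0) Afun.
pose Q := {v : P + W | if v is inr w then exists m, A (w, m) else True}.
pose r (o : option Q) := if o is Some x then sval x else inr w0.
have ri : injective r.
  have nQ (x : Q) : sval x <> inr w0.
    by case: x => [[a|w] hw] //= [Ew]; case: nw0; rewrite -Ew.
  by move=> [x|] [y|] //= => [/sval_inj->|/nQ|/esym/nQ].
pose q (x : Q) := sum_env p aval (sval x).
have env_r t : extends A t -> sum_env p t \o r =1 ext_env q (t w0).
  move=> tA [[[a|w] hw]|] //; rewrite /= /q //=.
  by case: hw => m Am; rewrite (tA _ _ Am) (avalA _ _ Am).
pose Sig' chi := exists2 l, (forall phi, List.In phi l -> Sig phi) &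
  forall s, sat chi s <-> exists t : P + W -> M, t \o r =1 s /\ sat (fconj l) t.
(* A value for [w0] by one-variable saturation over the parameters assigned by [A]. *)
have [mstar Hmstar] : exists m, forall chi, Sig' chi -> sat chi (ext_env q m).
  apply: (saturated_sub (@sval_inj _ _)) => cs /list_choice_incl[Lb LbSig Hcov].
  have [t tA Ht] := AFS Lb LbSig; exists (t w0) => chi /Hcov[l charl inclL].
  apply/charl; exists (sum_env p t); split; first exact: env_r.
  exact: sat_fconj_incl (inhabits m0) inclL Ht.
have : A (w0, mstar).
  apply: (maxA (fun x => A x \/ x = (w0, mstar))); [by left| |by right].
  split.
    have notA z : A z -> z.1 <> w0 by case: z => w m Am /= Ew; apply: nw0; exists m; rewrite -Ew.
    move=> z z' [Az|->] [Az'|->] //= Ez;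
      [exact: Afun Az Az' Ez|case: (notA _ Az Ez)|case: (notA _ Az' (esym Ez))].
  move=> l Hl; have [chi charchi] := formula_projection m0 (fconj l) ri.
  have [t' [t'r Ht']] := (charchi _).1 (Hmstar chi (ex_intro2 _ _ l Hl charchi)).
  exists (t' \o inr) => [w m [Am|[-> ->]]|]; last first.
    by apply: (iffLR (eq_sat _ _)) Ht' => -[a|w] //; apply: (t'r (Some (exist _ (inl a) I))).
  - exact: (t'r None).
  - have hw : exists m, A (w, m) by exists m.
    by rewrite -(avalA _ _ Am); apply: (t'r (Some (exist _ (inr w) hw))).
by move=> Aw0; apply: nw0; exists mstar.
Qed.

Theorem saturated_many : exists t : W -> M, forall phi, Sig phi -> sat phi (sum_env p t).
Proof.
have [A goodA maxA] := @Zorn_maximal _ good_partial (fun F FG Ftot => good_chain_union Ftot FG).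
have Atot := good_maximal_total goodA maxA.
have [t tA _] := extend_partial (fun _ => m0) goodA.1.
exists t => phi Sphi.
have [|t' t'A Ht'] := goodA.2 [:: phi]; first by move=> psi [<-|].
have -> : t = t'.
  by apply: functional_extensionality => w; have [m Am] := Atot w; rewrite (tA _ _ Am) (t'A _ _ Am).
by move/(sat_fconj _ _ (inhabits m0)): Ht'; apply; left.
Qed.

End ManyVariables.

End Saturation.

(** * Homogeneity and saturation of the monster *)

Lemma finite_injective_surjective (X : Type) (f : X -> X) :
  finite_type X -> injective f -> forall y, exists x, f x = y.
Proof.
move=> [l /finite_injects_ord[idx idxi idxK]] fi y.
pose S := [set i : 'I_(List.length l) | idx (List.nth i l y) == i].
have idxS x : idx x \in S by rewrite inE idxK.
pose F (i : 'I_(List.length l)) := idx (f (List.nth i l y)).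
have Finj : {in S &, injective F}.
  by move=> i j; rewrite !inE => /eqP Ei /eqP Ej /idxi/fi Eij; rewrite -Ei -Ej Eij.
have FS : F @: S = S.
  apply/eqP; rewrite eqEcard card_in_imset // leqnn andbT.
  by apply/subsetP => _ /imsetP[i _ ->]; apply: idxS.
by have := idxS y; rewrite -FS => /imsetP[i _ /idxi ->]; exists (List.nth i l y).
Qed.

Lemma finite_last_point (X K : Type) (u v : K -> X) (f : X -> X) (x0 : X) :
  finite_type X -> injective f -> (forall x, exists k, u k = x) ->
  (forall k k', u k = u k' <-> v k = v k') ->
  (forall k, u k <> x0 -> f (u k) = v k) -> forall k, f (u k) = v k.
Proof.
move=> Xfin fi usurj uv fE k; have [|/NNPP uk] := classic (u k <> x0); first exact: fE.
have [rep repK] := choice _ usurj.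
have vrep_inj : injective (v \o rep) by move=> x x' /= /uv; rewrite !repK.
have [x Ex] := finite_injective_surjective Xfin vrep_inj (f x0).
have [x0x|nx] := classic (x = x0).
  by rewrite uk -Ex x0x /=; apply/uv; rewrite repK.
have : f x = f x0 by rewrite -Ex /= -(fE (rep x)) repK.
by move/fi.
Qed.

Section Monster.
Variables (L : signature) (M : structure L).

Definition homogeneous_for (K : Type) :=
  forall u v : K -> M, same_type u v -> exists f, automorphism f /\ forall k, f (u k) = v k.

Lemma same_type_eq (K : Type) (u v : K -> M) (k k' : K) :
  same_type u v -> u k = u k' <-> v k = v k'.
Proof. by move=> uv; apply: (uv (feq (tvar L k) (tvar L k'))). Qed.

Lemma same_type_comp (K K' : Type) (h : K' -> K) (u v : K -> M) :
  same_type u v -> same_type (u \o h) (v \o h).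
Proof. by move=> uv phi; rewrite -(sat_rename phi h u) -(sat_rename phi h v). Qed.

Lemma finite_saturated (Q : Type) : finite_type M -> saturated_over M Q.
Proof.
move=> [l Hl] q Sig Hfs; apply: NNPP => nreal.
have bad m : exists phi, Sig phi /\ ~ sat phi (ext_env q m).
  apply: NNPP => nm; apply: nreal; exists m => phi Sphi.
  by apply: NNPP => nsat; apply: nm; exists phi.
have [ph phP] := choice _ bad.
have [|m Hm] := Hfs (List.map ph l); first by move=> _ /List.in_map_iff[m [<- _]]; case: (phP m).
by case: (phP m) => _; apply; apply/Hm/List.in_map/Hl.
Qed.

Lemma finite_homogeneous (K : Type) :
  monster M -> finite_type M -> inhabited M -> homogeneous_for K.
Proof.
move=> HM Mfin [m1] u v uv.
have [m0 m0P] : exists m0, (forall x, exists k, u k = x) \/ (forall k, u k <> m0).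
  have [usurj|/not_all_ex_not[m nm]] := classic (forall x, exists k, u k = x).
    by exists m1; left.
  by exists m; right => k Ek; apply: nm; exists k.
pose K1 := {m | m <> m0 /\ exists k, u k = m}.
have [rep repK] : exists rep : K1 -> K, forall x, u (rep x) = sval x.
  by apply: (choice (fun x k => u k = sval x)) => x; case: (svalP x).
(* [K1] omits [m0], so it is small although [M] is finite. *)
have K1small : small M K1.
  split; first by exists sval; apply: sval_inj.
  move=> [g gi]; have [m Em] := finite_injective_surjective Mfin (inj_comp (@sval_inj _ _) gi) m0.
  by case: (svalP (g m)) => /(_ Em).
have [f [faut fE]] := HM.2 K1 _ _ K1small (same_type_comp rep uv).
have f_off k : u k <> m0 -> f (u k) = v k.
  move=> nk; pose x : K1 := exist _ (u k) (conj nk (ex_intro _ k erefl)).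
  by have := fE x; rewrite /= repK /= => ->; apply/(same_type_eq _ _ uv); rewrite repK.
exists f; split=> //; case: m0P => [usurj|nm0]; last by move=> k; apply/f_off/nm0.
exact: finite_last_point Mfin (bij_inj faut.1) usurj (fun k k' => same_type_eq k k' uv) f_off.
Qed.

Lemma small_inhabited (X : Type) : small M X -> inhabited M.
Proof.
move=> [_ nMX]; apply: NNPP => nM; apply: nMX.
by exists (fun m => match nM (inhabits m) with end) => m; case: (nM (inhabits m)).
Qed.

Lemma finite_or_small_sum (X Y : Type) :
  finite_type M \/ small M X -> finite_type M \/ small M Y -> finite_type M \/ small M (X + Y).
Proof.
move=> [|sX]; first by left.
move=> [|sY]; first by left.
by have [|natM] := finite_or_nat M; [left|right; apply: small_sum].
Qed.

Lemma monster_homogeneous (K : Type) : monster M -> inhabited M ->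
  finite_type M \/ small M K -> homogeneous_for K.
Proof. by move=> HM M0 [Mfin|Ksmall]; [apply: finite_homogeneous|move=> u v; apply: HM.2]. Qed.

Lemma monster_saturated (K Q : Type) : monster M -> finite_type M \/ small M K ->
  injects Q K -> saturated_over M Q.
Proof.
move=> HM [Mfin|Ksmall] QK; first exact: finite_saturated.
by move=> q; apply: HM.1; apply: small_sub Ksmall QK.
Qed.

End Monster.

(** * Normality *)

Section Normality.
Variables (L : signature) (M : structure L).
Variables (I : Type) (a : I -> M) (E : (I -> M) -> (I -> M) -> Prop).

Lemma normal_of_equiv_over_definable :
  type_definable2 (equiv_over E a (J:=I)) -> normal_hyp E a.
Proof.
move=> defEq g ginv h gaut gK ginvK haut hfix.
have : equiv_over E a (ginv \o a) (h \o (ginv \o a)) by exists h.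
move=> /(type_definable2_aut defEq gaut)[f [_ [ffix fE]]].
rewrite /fixes; suff -> : (fun i => g (h (ginv (a i)))) = f \o a by [].
by apply: functional_extensionality => i; have := fE i; rewrite /= ginvK => ->.
Qed.

Hypothesis HE : fo_equivalence E.
Hypothesis HEdef : type_definable2 E.
Hypothesis Hnorm : normal_hyp E a.

Lemma equiv_over_of_witnesses (J : Type) (b c : J -> M) (a1 a2 : I -> M) :
  homogeneous_for M I -> homogeneous_for M (J + I) ->
  same_type a a1 -> same_type (sum_env b a1) (sum_env c a2) -> E a1 a2 ->
  equiv_over E a b c.
Proof.
move=> homI homJI aa1 ba1 Ea12.
have [h [haut ha]] := homI _ _ aa1.
have [g [gaut gba]] := homJI _ _ ba1.
have [[hinv hK hinvK] _] := haut.
have hinvaut := automorphism_inv haut hK hinvK.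
pose k := hinv \o g \o h.
have kfix : fixes E a k.
  have ha1 : hinv \o a1 = a by apply: functional_extensionality => i /=; rewrite -ha hK.
  have ka : (fun i => k (a i)) = hinv \o a2.
    by apply: functional_extensionality => i; rewrite /k /= ha; congr hinv; apply: (gba (inr i)).
  by rewrite /fixes ka -[in X in E _ X]ha1; apply: type_definable2_aut (HE.2.1 _ _ Ea12).
have kaut : automorphism k := automorphism_comp (automorphism_comp hinvaut gaut) haut.
exists g; split=> //; split; last by move=> j; apply: (gba (inl j)).
move: (Hnorm haut hK hinvK kaut kfix); rewrite /fixes.
by suff -> : (fun i => h (k (hinv (a i)))) = (fun i => g (a i)) by [];
  apply: functional_extensionality => i; rewrite /k /= !hinvK.
Qed.

Section Witnesses.
Variables (J : Type) (SigE : formula L (I + I) -> Prop).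
Hypothesis HSigE : forall x y, E x y <-> forall eps, SigE eps -> sat eps (sum_env x y).

(* The variables [(J + J) + (I + I)] stand for [b, c, a1, a2]. *)
Definition lift_left (x : J + I) : (J + J) + (I + I) :=
  match x with inl j => inl (inl j) | inr i => inr (inl i) end.
Definition lift_right (x : J + I) : (J + J) + (I + I) :=
  match x with inl j => inl (inr j) | inr i => inr (inr i) end.

Definition witness_formulas (psi : formula L ((J + J) + (I + I))) :=
  (exists theta, psi = fiff (frename theta lift_left) (frename theta lift_right)) \/
  (exists2 alpha, sat alpha a & psi = frename alpha (inr \o inl)) \/
  (exists2 eps, SigE eps & psi = frename eps inr).

Lemma sat_witness_formulas (b c : J -> M) (t : I + I -> M) :
  (forall psi, witness_formulas psi -> sat psi (sum_env (sum_env b c) t)) <->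
  [/\ same_type (sum_env b (t \o inl)) (sum_env c (t \o inr)),
       forall alpha, sat alpha a -> sat alpha (t \o inl) & E (t \o inl) (t \o inr)].
Proof.
have sat_left theta : sat (frename theta lift_left) (sum_env (sum_env b c) t) <->
    sat theta (sum_env b (t \o inl)) by rewrite sat_rename; apply: eq_sat => -[j|i].
have sat_right theta : sat (frename theta lift_right) (sum_env (sum_env b c) t) <->
    sat theta (sum_env c (t \o inr)) by rewrite sat_rename; apply: eq_sat => -[j|i].
have sat_E eps : sat (frename eps inr) (sum_env (sum_env b c) t) <->
    sat eps (sum_env (t \o inl) (t \o inr)) by rewrite sat_rename; apply: eq_sat => -[i|i].
split=> [Hw|[bc aa1 /HSigE Ea12] psi [[theta ->]|[[alpha Ha ->]|[eps Heps ->]]]].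
- split.
  + by move=> theta; rewrite -sat_left -sat_right -sat_fiff; apply: Hw; left; exists theta.
  + move=> alpha Ha; apply: (sat_rename alpha (inr \o inl) (sum_env (sum_env b c) t)).1.
    by apply: Hw; right; left; exists alpha.
  + by apply/HSigE => eps Heps; rewrite -sat_E; apply: Hw; right; right; exists eps.
- by rewrite sat_fiff sat_left sat_right.
- by rewrite sat_rename; apply: aa1.
- by rewrite sat_E; apply: Ea12.
Qed.

Definition equiv_over_formulas (chi : formula L (J + J)) :=
  forall b c : J -> M, equiv_over E a b c -> sat chi (sum_env b c).

Lemma witness_formulas_fin_sat (m0 : M) (b c : J -> M) :
  (forall chi, equiv_over_formulas chi -> sat chi (sum_env b c)) ->
  forall l, (forall psi, List.In psi l -> witness_formulas psi) ->
  exists t : I + I -> M, forall psi, List.In psi l -> sat psi (sum_env (sum_env b c) t).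
Proof.
move=> Hall l Hl; have inl_inj : injective (@inl (J + J) (I + I)) by move=> x y [].
have [chi charchi] := formula_projection m0 (fconj l) inl_inj.
have Schi : equiv_over_formulas chi.
  move=> b' c' [f [faut [ffix fE]]]; apply/charchi.
  exists (sum_env (sum_env b' c') (sum_env a (f \o a))); split=> //.
  apply/(sat_fconj _ _ (inhabits m0)) => psi /Hl; move: psi.
  apply/sat_witness_formulas; split=> //; last exact: HE.2.1 _ _ ffix.
  move=> theta; rewrite -(sat_aut theta (sum_env b' a) faut).
  by apply: eq_sat => -[j|i] //=; rewrite fE.
have [t' [t'inl Ht']] := (charchi _).1 (Hall chi Schi).
exists (t' \o inr) => psi /((sat_fconj _ _ (inhabits m0)).1 Ht').
by apply: (iffLR (eq_sat _ _)) => -[v|v] //; apply: t'inl.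
Qed.

End Witnesses.

Lemma equiv_over_definable (J : Type) : inhabited M ->
  homogeneous_for M I -> homogeneous_for M (J + I) ->
  (forall (Q : Type) (i : Q -> (J + J) + (I + I)), injective i -> saturated_over M Q) ->
  type_definable2 (equiv_over E a (J:=J)).
Proof.
move=> [m0] homI homJI satQ; have [SigE HSigE] := HEdef.
exists (equiv_over_formulas (J:=J)) => b c; split=> [bc chi Hchi|Hall]; first exact: Hchi.
have [t Ht] := saturated_many m0 satQ (witness_formulas_fin_sat HSigE m0 Hall).
have [bc aa1 Ea12] := (sat_witness_formulas HSigE b c t).1 Ht.
apply: equiv_over_of_witnesses homI homJI _ bc Ea12.
move=> alpha; split; first exact: aa1.
by move=> H1; apply: NNPP => na; apply: (aa1 (fneg alpha)).
Qed.

End Normality.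

Theorem mainTheorem3 (L : signature) (M : structure L) (HM : monster M)
  (I : Type) (a : I -> M) (E : (I -> M) -> (I -> M) -> Prop)
  (HI : small M I) (HE : fo_equivalence E) (HEdef : type_definable2 E) :
  normal_hyp E a <->
  (forall J : Type, small M J -> type_definable2 (equiv_over E a (J:=J))).
Proof.
split=> [Hnorm J HJ|Hdef]; last exact: normal_of_equiv_over_definable (Hdef I HI).
have M0 := small_inhabited HI.
have homI := monster_homogeneous HM M0 (or_intror HI).
have JI : finite_type M \/ small M (J + I) by apply: finite_or_small_sum; right.
apply: equiv_over_definable => //; first exact: monster_homogeneous HM M0 JI.
move=> Q i iinj; apply: (monster_saturated HM _ (ex_intro _ i iinj)).
by apply: finite_or_small_sum; apply: finite_or_small_sum; right.
Qed.
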